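(* Let $\Gamma$ be a finite simple graph and $A_\Gamma$ the associated right-angled Artin group with standard generating set $V(\Gamma)$, and let $X = V(\Gamma)\cup V(\Gamma)^{-1}$. If $\phi \in \mathrm{Aut}(A_\Gamma)$ is length-preserving (with respect to word length over $X$), then $\phi$ is a finite composition of inversions and graph automorphisms.
   Context: The right-angled Artin group (RAAG) of a finite simple graph $\Gamma$ is $A_\Gamma = \langle V(\Gamma) \mid [s,t]=1 \text{ for all } \{s,t\}\in E(\Gamma)\rangle$ (generators commute iff they are joined by an edge). For $g \in A_\Gamma$, $|g|$ denotes the length of a shortest word over $X$ representing $g$. An automorphism $\phi$ is length-preserving if $|\phi(g)| = |g|$ for every $g\in A_\Gamma$. An inversion is the automorphism sending one vertex $x\in V(\Gamma)$ to $x^{-1}$ and fixing all other vertices. A graph automorphism is the automorphism of $A_\Gamma$ induced by a graph automorphism of $\Gamma$ (permuting the vertex generators). *)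

From Stdlib Require Import Relations List.
From mathcomp Require Import all_boot all_fingroup.
Set Implicit Arguments. Unset Strict Implicit. Unset Printing Implicit Defensive.

(* A letter (v, b) over V is the generator v if b = false and v^{-1} if b = true;
   a word over X = V ∪ V^{-1} is a seq of letters. *)
Definition word (V : finType) := seq (V * bool)%type.

Definition inv_letter (V : finType) (a : V * bool) : V * bool := (a.1, ~~ a.2).
Definition inv_word (V : finType) (w : word V) : word V := rev (map (@inv_letter V) w).

(* Elementary moves in the presentation of A_Gamma (e = adjacency of Gamma):
   free cancellation x x^{-1} -> 1 and commutation of letters on adjacent vertices. *)
Inductive raag_step (V : finType) (e : rel V) : word V -> word V -> Prop :=
| raag_cancel (u v : word V) (a : V * bool) :
    raag_step e (u ++ a :: inv_letter a :: v) (u ++ v)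
| raag_comm (u v : word V) (a b : V * bool) :
    e a.1 b.1 -> raag_step e (u ++ a :: b :: v) (u ++ b :: a :: v).

Definition raag_eq (V : finType) (e : rel V) : relation (word V) :=
  clos_refl_sym_trans _ (raag_step e).

Definition raag_len (V : finType) (e : rel V) (w : word V) (n : nat) : Prop :=
  (exists w', raag_eq e w w' /\ size w' = n) /\
  (forall w', raag_eq e w w' -> n <= size w').

(* An endomorphism of A_Gamma is given by the images f v (words) of the generators. *)
Definition ext (V : finType) (f : V -> word V) (w : word V) : word V :=
  flatten (map (fun a : V * bool => if a.2 then inv_word (f a.1) else f a.1) w).

Definition is_hom (V : finType) (e : rel V) (f : V -> word V) : Prop :=
  forall s t, e s t -> raag_eq e (f s ++ f t) (f t ++ f s).

Definition id_map (V : finType) : V -> word V := fun v => [:: (v, false)].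

(* composition: (comp f g) = f o g *)
Definition aut_comp (V : finType) (f g : V -> word V) : V -> word V :=
  fun v => ext f (g v).

Definition is_aut (V : finType) (e : rel V) (f : V -> word V) : Prop :=
  is_hom e f /\
  exists g, is_hom e g /\
    forall v, raag_eq e (aut_comp f g v) (id_map v) /\ raag_eq e (aut_comp g f v) (id_map v).

Definition length_preserving (V : finType) (e : rel V) (f : V -> word V) : Prop :=
  forall w n, raag_len e (ext f w) n <-> raag_len e w n.

Definition inversion (V : finType) (x : V) : V -> word V :=
  fun v => [:: (v, v == x)].

Definition graph_aut (V : finType) (s : {perm V}) : V -> word V :=
  fun v => [:: (s v, false)].

Definition is_graph_automorphism (V : finType) (e : rel V) (s : {perm V}) : Prop :=
  forall u v, e (s u) (s v) = e u v.

Definition elementary (V : finType) (e : rel V) (h : V -> word V) : Prop :=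
  (exists x, h = inversion x) \/
  (exists s : {perm V}, is_graph_automorphism e s /\ h = graph_aut s).

Definition aut_eq (V : finType) (e : rel V) (f g : V -> word V) : Prop :=
  forall v, raag_eq e (f v) (g v).

(* A length-preserving automorphism phi sends each generator v to an element of
   length 1, i.e. to a letter sigma(v)^{+-1}.  Taking exponent sums in psi (phi v) = v,
   where psi is the inverse of phi, shows that sigma is injective, hence a permutation.
   If x, y are adjacent, then phi x and phi y commute, hence so do the letters
   sigma(x)^{+-1} and sigma(y)^{+-1}; this forces sigma(x) and sigma(y) to be adjacent,
   since otherwise sending them to the transpositions (0 1) and (1 2) of S_3, and every
   other vertex to 1, would be a homomorphism separating the two products.  A
   permutation of a finite graph mapping edges to edges is a graph automorphism, and
   phi is sigma preceded by the inversions at the vertices v with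
   phi v = sigma(v)^{-1}. *)

From Stdlib Require Import Relations List.
From mathcomp Require Import all_boot all_fingroup ssralg ssrint.
Set Implicit Arguments. Unset Strict Implicit. Unset Printing Implicit Defensive.
Import GRing.Theory.
Local Open Scope ring_scope.

Section RaagWords.
Variables (V : finType) (e : rel V).

Lemma raag_eq_cat (w1 w1' w2 w2' : word V) :
  raag_eq e w1 w1' -> raag_eq e w2 w2' -> raag_eq e (w1 ++ w2) (w1' ++ w2').
Proof.
have congr_cat (f : word V -> word V) :
    (forall w w', raag_step e w w' -> raag_step e (f w) (f w')) ->
    forall w w', raag_eq e w w' -> raag_eq e (f w) (f w').
  move=> f_step w w'; elim=> {w w'} [w w' /f_step|w|w w' _|w w' w'' _ IH1 _ IH2].
  - exact: rst_step.
  - exact: rst_refl.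
  - exact: rst_sym.
  - exact: rst_trans IH1 IH2.
move=> eq1 eq2; apply: (rst_trans _ _ _ (w1' ++ w2)).
  apply: (congr_cat (cat^~ w2)) eq1 => _ _ [u v a|u v a b eab]; rewrite -!catA.
  + exact: raag_cancel.
  + exact: raag_comm.
apply: (congr_cat (cat w1')) eq2 => _ _ [u v a|u v a b eab]; rewrite !catA.
+ exact: raag_cancel.
+ exact: raag_comm.
Qed.

Lemma ext_cat (f : V -> word V) (w w' : word V) : ext f (w ++ w') = ext f w ++ ext f w'.
Proof. by rewrite /ext map_cat flatten_cat. Qed.

Lemma ext_letter (f : V -> word V) (a : V * bool) :
  ext f [:: a] = if a.2 then inv_word (f a.1) else f a.1.
Proof. by rewrite /ext /= cats0. Qed.

End RaagWords.

Section LetterSums.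
Variables (V : finType) (e : rel V) (M : zmodType) (om : V * bool -> M).
Hypothesis om_inv : forall a, om (inv_letter a) = - om a.

Definition letter_sum (w : word V) : M := \sum_(a <- w) om a.

Lemma letter_sum_cat (w w' : word V) :
  letter_sum (w ++ w') = letter_sum w + letter_sum w'.
Proof. exact: big_cat. Qed.

Lemma letter_sum_inv_word (w : word V) : letter_sum (inv_word w) = - letter_sum w.
Proof.
rewrite /letter_sum /inv_word big_rev big_map -sumrN.
by apply: eq_bigr => a _; rewrite om_inv.
Qed.

Lemma letter_sum_raag_eq (w w' : word V) :
  raag_eq e w w' -> letter_sum w = letter_sum w'.
Proof.
elim=> {w w'} [w w' []|w|w w' _ ->|w w' w'' _ -> _ ->] //= u v a *.
  by rewrite !letter_sum_cat /letter_sum !big_cons om_inv addNKr.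
by rewrite !letter_sum_cat /letter_sum !big_cons; congr (_ + _); apply: addrCA.
Qed.

End LetterSums.

Section ExtLetterSums.
Variables (V : finType) (e : rel V) (M : zmodType) (om : V * bool -> M).
Hypothesis om_inv : forall a, om (inv_letter a) = - om a.

Lemma letter_sum_ext (f : V -> word V) (w : word V) :
  letter_sum om (ext f w) = letter_sum (fun a => letter_sum om (ext f [:: a])) w.
Proof.
elim: w => [|a w IH]; first by rewrite /letter_sum !big_nil.
by rewrite -cat1s ext_cat letter_sum_cat IH [RHS]/letter_sum big_cons.
Qed.

Lemma letter_sum_ext_raag_eq (f : V -> word V) (w w' : word V) :
  raag_eq e w w' -> letter_sum om (ext f w) = letter_sum om (ext f w').
Proof.
rewrite !letter_sum_ext; apply: letter_sum_raag_eq => a.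
by rewrite !ext_letter /=; case: a.2; rewrite ?letter_sum_inv_word ?opprK.
Qed.

End ExtLetterSums.

Section ExponentSums.
Variables (V : finType) (e : rel V).

Definition exp_weight (x : V) (a : V * bool) : int := (a.1 == x)%:R * (-1) ^+ a.2.

Definition exp_sum (x : V) : word V -> int := letter_sum (exp_weight x).

Lemma exp_weight_inv (x : V) (a : V * bool) :
  exp_weight x (inv_letter a) = - exp_weight x a.
Proof. by rewrite /exp_weight /=; case: a.2; rewrite ?mulrN ?opprK. Qed.

Lemma exp_sum_raag_eq (x : V) (w w' : word V) :
  raag_eq e w w' -> exp_sum x w = exp_sum x w'.
Proof. exact: (letter_sum_raag_eq (exp_weight_inv x)). Qed.

Lemma exp_sum_ext_raag_eq (f : V -> word V) (x : V) (w w' : word V) :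
  raag_eq e w w' -> exp_sum x (ext f w) = exp_sum x (ext f w').
Proof. exact: (letter_sum_ext_raag_eq (exp_weight_inv x)). Qed.

Lemma exp_sum_generator (x v : V) : exp_sum x [:: (v, false)] = (v == x)%:R.
Proof. by rewrite /exp_sum /letter_sum big_seq1 /exp_weight mulr1. Qed.

Lemma exp_sum_ext_letter (f : V -> word V) (x : V) (a : V * bool) :
  exp_sum x (ext f [:: a]) = (-1) ^+ a.2 * exp_sum x (f a.1).
Proof.
rewrite ext_letter; case: a.2; rewrite ?mul1r // mulN1r.
exact: letter_sum_inv_word (exp_weight_inv x) _.
Qed.

Lemma raag_len_generator (v : V) : raag_len e [:: (v, false)] 1.
Proof.
split; first by exists [:: (v, false)]; split=> //; apply: rst_refl.
case=> // /(exp_sum_raag_eq v); rewrite exp_sum_generator eqxx.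
by rewrite /exp_sum /letter_sum big_nil.
Qed.

Lemma length_preserving_letter (phi : V -> word V) :
  length_preserving e phi -> forall v, exists a, raag_eq e (phi v) [:: a].
Proof.
move=> phi_len v.
have [[w [phi_w size_w]] _] := (phi_len [:: (v, false)] 1%N).2 (raag_len_generator v).
rewrite ext_letter in phi_w.
by case: w phi_w size_w => [|a []] // phi_a _; exists a.
Qed.

End ExponentSums.

Section GroupEvaluation.
Variables (V : finType) (e : rel V) (gT : groupType) (rho : V -> gT).
Hypothesis rho_comm : forall s t, e s t -> commute (rho s) (rho t).

Definition letter_eval (a : V * bool) : gT := if a.2 then (rho a.1)^-1%g else rho a.1.

Definition raag_eval (w : word V) : gT := (\prod_(a <- w) letter_eval a)%g.

Lemma raag_eval_cat (w w' : word V) :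
  raag_eval (w ++ w') = (raag_eval w * raag_eval w')%g.
Proof. exact: big_cat. Qed.

Lemma raag_eval_raag_eq (w w' : word V) :
  raag_eq e w w' -> raag_eval w = raag_eval w'.
Proof.
elim=> {w w'} [w w' []|w|w w' _ ->|w w' w'' _ -> _ ->] //= u v a.
  rewrite !raag_eval_cat /raag_eval !big_cons /letter_eval /=.
  by case: a.2; rewrite ?invgK ?mulKg ?mulVKg.
move=> b eab; have comm_ab : commute (letter_eval a) (letter_eval b).
  have commVl (x y : gT) : commute x y -> commute x^-1%g y
    by move=> xy; apply: commute_sym; apply: commuteV; apply: commute_sym.
  have comm_rho := rho_comm eab.
  by rewrite /letter_eval; case: a.2; case: b.2; try apply: commuteV; try apply: commVl.
rewrite !raag_eval_cat /raag_eval !big_cons; congr (_ * _)%g.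
by rewrite !mulgA comm_ab.
Qed.

End GroupEvaluation.

Lemma commuting_letters_adjacent (V : finType) (e : rel V) (a b : V * bool) :
  symmetric e -> a.1 != b.1 -> raag_eq e [:: a; b] [:: b; a] -> e a.1 b.1.
Proof.
case: a b => [u s] [w t] e_sym /= uw; have [//|nuw] := boolP (e u w).
pose i1 : 'I_3 := Ordinal (isT : (1 < 3)%N).
pose rho v : {perm 'I_3} :=
  if v == u then tperm ord0 i1 else if v == w then tperm i1 ord_max else 1%g.
have rho_comm x y : e x y -> commute (rho x) (rho y).
  move=> exy; rewrite /rho.
  case: (x =P u) => [xu|_]; case: (y =P u) => [yu|_]; case: (x =P w) => [xw|_];
    case: (y =P w) => [yw|_]; subst;
    by [ exact: commute_refl | exact: commute1 | apply: commute_sym; exact: commute1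
       | rewrite eqxx in uw | rewrite ?(e_sym w) (negbTE nuw) in exy ].
have letter_rho c : letter_eval rho c = rho c.1.
  rewrite /letter_eval /rho; case: c.2 => //.
  by case: ifP; rewrite ?tpermV //; case: ifP; rewrite ?tpermV ?invg1.
move=> /(raag_eval_raag_eq rho_comm) /(congr1 (fun p : {perm 'I_3} => p ord0)).
rewrite /raag_eval !big_cons !big_nil !mulg1 !letter_rho /=.
by rewrite /rho eqxx (eq_sym w) (negbTE uw) eqxx !permM /tperm !permE.
Qed.

Lemma perm_homo_graph_automorphism (V : finType) (e : rel V) (s : {perm V}) :
  {homo s : x y / e x y} -> is_graph_automorphism e s.
Proof.
move=> s_homo.
pose E := [set p : V * V | e p.1 p.2].
pose sE (p : V * V) := (s p.1, s p.2).
have sE_inj : injective sE by move=> [x y] [x' y'] [] /perm_inj -> /perm_inj ->.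
have sE_E : sE @: E = E.
  apply/eqP; rewrite eqEcard card_imset // leqnn andbT.
  by apply/subsetP => _ /imsetP[[x y] exy ->]; move: exy; rewrite !inE; apply: s_homo.
by move=> x y; have := mem_imset E (x, y) sE_inj; rewrite sE_E !inE.
Qed.

Section LetterImages.
Variables (V : finType) (e : rel V) (phi psi : V -> word V) (F : V -> V * bool).
Hypothesis phiF : forall v, raag_eq e (phi v) [:: F v].
Hypothesis psi_phi : forall v, raag_eq e (ext psi (phi v)) [:: (v, false)].

Lemma letter_image_injective : injective (fun v => (F v).1).
Proof.
have exp_sum_psi x v : (v == x)%:R = (-1) ^+ (F v).2 * exp_sum x (psi (F v).1).
  rewrite -exp_sum_ext_letter -(exp_sum_ext_raag_eq _ _ (phiF v)).
  by rewrite (exp_sum_raag_eq x (psi_phi v)) exp_sum_generator.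
move=> v w /= Fvw; have := exp_sum_psi v v; have := exp_sum_psi v w.
rewrite eqxx Fvw; case: eqP => [-> //|_] /esym /eqP.
by rewrite mulf_eq0 signr_eq0 => /eqP ->; rewrite mulr0 => /eqP; rewrite oner_eq0.
Qed.

Hypotheses (e_sym : symmetric e) (e_irr : irreflexive e) (phi_hom : is_hom e phi).

Lemma letter_image_homo : {homo (fun v => (F v).1) : x y / e x y}.
Proof.
move=> x y exy; apply: commuting_letters_adjacent e_sym _ _.
  by apply: contraTneq exy => /letter_image_injective ->; rewrite e_irr.
have F_phi z : raag_eq e [:: F z] (phi z) := rst_sym _ _ _ _ (phiF z).
apply: (rst_trans _ _ _ (phi x ++ phi y)); first exact: (raag_eq_cat (F_phi x) (F_phi y)).
apply: (rst_trans _ _ _ (phi y ++ phi x)); first exact: phi_hom.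
exact: (raag_eq_cat (phiF y) (phiF x)).
Qed.

End LetterImages.

Lemma comp_inversions (V : finType) (xs : seq V) (v : V) :
  foldr (@aut_comp V) (@id_map V) (map (@inversion V) xs) v = [:: (v, odd (count_mem v xs))].
Proof.
elim: xs => [|x xs IH] //=; rewrite /aut_comp IH ext_letter /inversion /= eq_sym.
by case: (x == v); rewrite /= ?add0n; case: (odd _).
Qed.

Lemma signed_perm_decomposition (V : finType) (e : rel V) (sigma : {perm V}) (b : V -> bool) :
  is_graph_automorphism e sigma ->
  exists2 l, Forall (elementary e) l &
    forall v, foldr (@aut_comp V) (@id_map V) l v = [:: (sigma v, b v)].
Proof.
move=> sigma_aut; have [xs xs_uniq mem_xs] : exists2 xs, uniq xs & forall x, (x \in xs) = b x.
  exists [seq x <- enum V | b x]; first by rewrite filter_uniq ?enum_uniq.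
  by move=> x; rewrite mem_filter mem_enum andbT.
exists (graph_aut sigma :: map (@inversion V) xs).
  constructor; first by right; exists sigma.
  by apply/Forall_map/Forall_forall => x _; left; exists x.
move=> v; rewrite /= /aut_comp comp_inversions count_uniq_mem // mem_xs oddb.
by rewrite ext_letter /graph_aut; case: (b v).
Qed.

Theorem lemma2p3 (V : finType) (e : rel V)
  (e_sym : symmetric e) (e_irr : irreflexive e)
  (phi : V -> word V) :
  is_aut e phi -> length_preserving e phi ->
  exists l : list (V -> word V),
    Forall (elementary e) l /\ aut_eq e phi (foldr (@aut_comp V) (@id_map V) l).
Proof.
move=> [phi_hom [psi [_ psi_phi]]] phi_len.
have [F phiF] := fin_all_exists (length_preserving_letter phi_len).
have psi_phiF v : raag_eq e (ext psi (phi v)) [:: (v, false)] := (psi_phi v).2.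
pose sigma := perm (letter_image_injective phiF psi_phiF).
have sigma_aut : is_graph_automorphism e sigma.
  apply: perm_homo_graph_automorphism => x y exy; rewrite !permE.
  exact: letter_image_homo phiF psi_phiF e_sym e_irr phi_hom x y exy.
have [l l_elem l_val] := signed_perm_decomposition (fun v => (F v).2) sigma_aut.
by exists l; split=> // v; rewrite l_val permE -surjective_pairing.
Qed.
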